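(* For every $m\in\mathbb{N}$ the set $$X_m:=\left\{\sum_{i=1}^m\frac{d_i}{2^{i}}:\ d_{i}\in\{0\}\cup \{t_{k,n}:k\ge0,n\ge1\}\right\}$$ is nowhere dense in $\mathbb{R}$.
   Context: For $k\ge 0$ and $n\ge 1$, $t_{k,n}:=\frac{1}{2^k n}$. *)

From Stdlib Require Import Reals Rtopology.
Open Scope R_scope.

Definition t (k n : nat) : R := 1 / (2 ^ k * INR n).

Definition digit (d : R) : Prop :=
  d = 0 \/ exists k n : nat, (1 <= n)%nat /\ d = t k n.

Fixpoint dsum (d : nat -> R) (m : nat) : R :=
  match m with
  | O => 0
  | S m' => dsum d m' + d (S m') / 2 ^ (S m')
  end.

Definition X (m : nat) (x : R) : Prop :=
  exists d : nat -> R,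
    (forall i : nat, (1 <= i <= m)%nat -> digit (d i)) /\ x = dsum d m.

Definition nowhere_dense (A : R -> Prop) : Prop :=
  forall x : R, ~ interior (adherence A) x.

(* X_m is a closed set of rational numbers, and a closed set without irrational points has empty interior.
   Closedness goes by induction on m: X_(m+1) = X_m + D / 2^(m+1), where the digit set D contains 0 and has
   only finitely many elements above any r > 0.  Adding such a set to a closed set keeps it closed: near
   a point outside the sum, the small digits are handled by the single neighbourhood avoiding the set itself,
   and each of the finitely many large digits by a neighbourhood of its own. *)

From Stdlib Require Import Reals Rtopology ZArith Lia Lra Psatz Classical List.
Open Scope R_scope.

Definition Rat (x : R) : Prop := exists p q : Z, (0 < q)%Z /\ x * IZR q = IZR p.

Lemma Rat_IZR (z : Z) : Rat (IZR z).
Proof. exists z, 1%Z. split; [lia | ring]. Qed.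

Lemma Rat_INR (n : nat) : Rat (INR n).
Proof. rewrite INR_IZR_INZ. apply Rat_IZR. Qed.

Lemma Rat_plus x y : Rat x -> Rat y -> Rat (x + y).
Proof.
  intros [p1 [q1 [H1 E1]]] [p2 [q2 [H2 E2]]].
  exists (p1 * q2 + p2 * q1)%Z, (q1 * q2)%Z. split; [lia |].
  rewrite plus_IZR, !mult_IZR, <- E1, <- E2. ring.
Qed.

Lemma Rat_opp x : Rat x -> Rat (- x).
Proof.
  intros [p [q [H E]]]. exists (- p)%Z, q. split; [lia |].
  rewrite opp_IZR, <- E. ring.
Qed.

Lemma Rat_minus x y : Rat x -> Rat y -> Rat (x - y).
Proof. intros Hx Hy. apply Rat_plus; [exact Hx | apply Rat_opp, Hy]. Qed.

Lemma Rat_mult x y : Rat x -> Rat y -> Rat (x * y).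
Proof.
  intros [p1 [q1 [H1 E1]]] [p2 [q2 [H2 E2]]].
  exists (p1 * p2)%Z, (q1 * q2)%Z. split; [lia |].
  rewrite !mult_IZR, <- E1, <- E2. ring.
Qed.

Lemma Rat_pow x k : Rat x -> Rat (x ^ k).
Proof.
  intros Hx. induction k as [| k IH]; simpl.
  - apply (Rat_IZR 1).
  - apply Rat_mult; assumption.
Qed.

Lemma Rat_inv x : Rat x -> Rat (/ x).
Proof.
  intros [p [q [H E]]].
  destruct (Z.eq_dec p 0) as [-> | Hp].
  - assert (Hq : IZR q <> 0) by (apply not_0_IZR; lia).
    replace x with 0 by (apply (Rmult_eq_reg_r (IZR q)); [rewrite E; ring | exact Hq]).
    rewrite Rinv_0. apply (Rat_IZR 0).
  - assert (Hx : x <> 0) by (intros ->; apply Hp, eq_IZR; rewrite <- E; ring).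
    assert (Hinv : / x * IZR p = IZR q) by (rewrite <- E; field; exact Hx).
    destruct (Z_lt_le_dec 0 p) as [Hpos | Hneg].
    + exists q, p. split; assumption.
    + exists (- q)%Z, (- p)%Z. split; [lia |]. rewrite !opp_IZR, <- Hinv. ring.
Qed.

Lemma Rat_div x y : Rat x -> Rat y -> Rat (x / y).
Proof. intros Hx Hy. apply Rat_mult; [exact Hx | apply Rat_inv, Hy]. Qed.

(* The descent step: if p^2 = 2 q^2 then p is even, and p = 2a gives q^2 = 2 a^2 with |a| < q. *)
Lemma Z_sqr_eq_double_sqr (q : Z) : (0 <= q)%Z -> forall p : Z, (p * p = 2 * q * q)%Z -> q = 0%Z.
Proof.
  intros Hq. generalize Hq. pattern q. apply Z_lt_induction; [| exact Hq].
  clear q Hq. intros q IH Hq p Hp.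
  destruct (Z.Even_or_Odd p) as [[a ->] | [a ->]]; [| exfalso; nia].
  destruct (Z.eq_dec q 0) as [E | E]; [exact E |].
  assert (Ha : (0 <= Z.abs a < q)%Z) by nia.
  assert (Z.abs a = 0)%Z by (apply (IH (Z.abs a) Ha (proj1 Ha) q); nia).
  nia.
Qed.

Lemma sqrt2_irrational : ~ Rat (sqrt 2).
Proof.
  intros [p [q [Hq E]]].
  assert (Hq' : 0 < IZR q) by (apply IZR_lt; exact Hq).
  assert (Hs : sqrt 2 * sqrt 2 = 2) by (apply sqrt_sqrt; lra).
  assert (Hp : (0 <= p)%Z).
  { apply le_IZR. rewrite <- E. pose proof (sqrt_pos 2). nra. }
  assert (Hsq : (p * p = 2 * q * q)%Z).
  { apply eq_IZR. rewrite !mult_IZR, <- E.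
    transitivity ((sqrt 2 * sqrt 2) * (IZR q * IZR q)); [ring | rewrite Hs; ring]. }
  pose proof (Z_sqr_eq_double_sqr q (Z.lt_le_incl _ _ Hq) p Hsq). lia.
Qed.

(* Of the two points a + s and a + 2s with s = sqrt 2 / N, at least one is irrational, since their
   difference is. *)
Lemma irrational_between a b : a < b -> exists r, a < r < b /\ ~ Rat r.
Proof.
  intros Hab.
  destruct (archimed_cor1 ((b - a) / 4)) as [N [HN HN0]]; [lra |].
  assert (HNr : 0 < INR N) by (apply lt_0_INR; exact HN0).
  assert (Hs : 1 < sqrt 2 < 2).
  { pose proof (sqrt_pos 2). pose proof (sqrt_sqrt 2 ltac:(lra)). split; nra. }
  set (s := sqrt 2 / INR N).
  assert (Hs0 : 0 < s) by (apply Rdiv_lt_0_compat; lra).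
  assert (Hsb : 2 * s < b - a).
  { unfold s, Rdiv. pose proof (Rinv_0_lt_compat _ HNr). nra. }
  assert (Hs_irr : ~ Rat s).
  { intros Hrat. apply sqrt2_irrational.
    replace (sqrt 2) with (s * INR N) by (unfold s; field; lra).
    apply Rat_mult; [exact Hrat | apply Rat_INR]. }
  destruct (classic (Rat (a + s))) as [Hrat | Hirr].
  - exists (a + 2 * s). split; [lra |]. intros Hrat2. apply Hs_irr.
    replace s with ((a + 2 * s) - (a + s)) by ring. apply Rat_minus; assumption.
  - exists (a + s). split; [lra | exact Hirr].
Qed.

Lemma nowhere_dense_of_closed_rational (A : R -> Prop) :
  closed_set A -> (forall x, A x -> Rat x) -> nowhere_dense A.
Proof.
  intros Hcl Hrat x [del Hdel].
  destruct (irrational_between (x - del) (x + del)) as [r [Hr Hirr]]; [destruct del; simpl; lra |].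
  apply Hirr, Hrat, (adherence_P2 A Hcl), Hdel.
  unfold disc. apply Rabs_def1; lra.
Qed.

Definition set_plus (A B : R -> Prop) (x : R) : Prop := exists a b, A a /\ B b /\ x = a + b.

Definition sparse (B : R -> Prop) : Prop :=
  forall r, 0 < r -> exists l : list R, forall b, B b -> r <= Rabs b -> In b l.

Lemma closed_set_ext (A B : R -> Prop) : (forall x, A x <-> B x) -> closed_set A -> closed_set B.
Proof.
  intros HAB HA x Hx. destruct (HA x) as [del Hdel].
  - intros Ax. apply Hx, HAB, Ax.
  - exists del. intros y Hy By. apply (Hdel y Hy), HAB, By.
Qed.

Lemma closed_set_singleton (a : R) : closed_set (fun x => x = a).
Proof.
  intros x Hx.
  assert (Hpos : 0 < Rabs (x - a)) by (apply Rabs_pos_lt; intros E; apply Hx; lra).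
  exists (mkposreal _ Hpos). intros y Hy ->. unfold disc in Hy; simpl in Hy.
  rewrite <- Rabs_Ropp in Hy. replace (- (a - x)) with (x - a) in Hy by ring. lra.
Qed.

Lemma uniform_radius (P : R -> R -> Prop) (l : list R) :
  (forall b e e', 0 < e' <= e -> P b e -> P b e') ->
  (forall b, In b l -> exists e, 0 < e /\ P b e) ->
  exists e, 0 < e /\ forall b, In b l -> P b e.
Proof.
  intros Hmono. induction l as [| b0 l IH]; intros Hex.
  - exists 1. split; [lra | intros b []].
  - destruct (Hex b0 (or_introl eq_refl)) as [e0 [He0 P0]].
    destruct IH as [e1 [He1 P1]]; [intros b Hb; apply Hex; right; exact Hb |].
    exists (Rmin e0 e1). split; [apply Rmin_glb_lt; assumption |].
    intros b [<- | Hb].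
    + apply (Hmono _ e0); [split; [apply Rmin_glb_lt | apply Rmin_l] | ]; assumption.
    + apply (Hmono _ e1); [split; [apply Rmin_glb_lt | apply Rmin_r] | apply P1]; assumption.
Qed.

Lemma closed_set_plus_sparse (A B : R -> Prop) :
  closed_set A -> B 0 -> sparse B -> closed_set (set_plus A B).
Proof.
  intros HA B0 HB x Hx.
  assert (Hout : forall b, B b -> exists e, 0 < e /\ forall y, Rabs (y - (x - b)) < e -> ~ A y).
  { intros b Bb. destruct (HA (x - b)) as [del Hdel].
    - intros Ax. apply Hx. exists (x - b), b. repeat split; [exact Ax | exact Bb | ring].
    - exists del. split; [apply cond_pos | intros y Hy; exact (Hdel y Hy)]. }
  destruct (Hout 0 B0) as [r [Hr Hr']].
  destruct (HB (r / 2)) as [l Hl]; [lra |].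
  destruct (uniform_radius (fun b e => B b -> forall y, Rabs (y - (x - b)) < e -> ~ A y) l)
    as [e [He He']].
  { intros b e e' He' H Bb y Hy. apply (H Bb). lra. }
  { intros b _. destruct (classic (B b)) as [Bb | NBb].
    - destruct (Hout b Bb) as [e [He He']]. exists e. split; [exact He | intros; apply He'; assumption].
    - exists 1. split; [lra | intros Bb; contradiction]. }
  assert (Hmin : 0 < Rmin (r / 2) e) by (apply Rmin_glb_lt; lra).
  exists (mkposreal _ Hmin). intros y Hy [a [b [Aa [Bb ->]]]].
  unfold disc in Hy; simpl in Hy.
  pose proof (Rmin_l (r / 2) e). pose proof (Rmin_r (r / 2) e).
  replace (a + b - x) with (a - (x - b)) in Hy by ring.
  destruct (Rlt_or_le (Rabs b) (r / 2)) as [Hsmall | Hlarge].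
  - apply (Hr' a); [| exact Aa].
    replace (a - (x - 0)) with ((a - (x - b)) + - b) by ring.
    eapply Rle_lt_trans; [apply Rabs_triang |]. rewrite Rabs_Ropp. lra.
  - apply (He' b (Hl b Bb Hlarge) Bb a); [lra | exact Aa].
Qed.

Lemma one_plus_INR_le_pow2 (k : nat) : 1 + INR k <= 2 ^ k.
Proof.
  induction k as [| k IH]; [simpl; lra |].
  rewrite S_INR, <- tech_pow_Rmult. pose proof (pos_INR k). lra.
Qed.

Lemma digit_t_large_bounded (r : R) : 0 < r ->
  exists N : nat, forall k n, (1 <= n)%nat -> r <= t k n -> (k <= N /\ n <= N)%nat.
Proof.
  intros Hr.
  destruct (archimed (/ r)) as [HN _].
  assert (Hr' : 0 < / r) by (apply Rinv_0_lt_compat; exact Hr).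
  exists (Z.to_nat (up (/ r))). intros k n Hn Hrt.
  assert (HNr : / r < INR (Z.to_nat (up (/ r)))).
  { rewrite INR_IZR_INZ, Z2Nat.id; [exact HN | apply le_IZR; lra]. }
  assert (Hn' : 1 <= INR n) by (apply (le_INR 1); exact Hn).
  pose proof (one_plus_INR_le_pow2 k) as Hk. pose proof (pos_INR k).
  assert (Hprod : 2 ^ k * INR n <= / r).
  { unfold t in Hrt. apply Rmult_le_reg_l with r; [exact Hr |].
    rewrite Rinv_r by lra.
    apply Rmult_le_compat_r with (r := 2 ^ k * INR n) in Hrt; [| nra].
    replace (1 / (2 ^ k * INR n) * (2 ^ k * INR n)) with 1 in Hrt by (field; nra). lra. }
  split; apply INR_le; nra.
Qed.

Lemma sparse_scaled_digits (c : R) : 0 < c -> sparse (fun y => exists e, digit e /\ y = e / c).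
Proof.
  intros Hc r Hr.
  destruct (digit_t_large_bounded (r * c)) as [N HN]; [nra |].
  exists (map (fun p => t (fst p) (snd p) / c) (list_prod (seq 0 (S N)) (seq 0 (S N)))).
  intros b [e [[-> | [k [n [Hn ->]]]] ->]] Hb.
  - unfold Rdiv in Hb. rewrite Rmult_0_l, Rabs_R0 in Hb. lra.
  - assert (Ht : 0 < t k n).
    { unfold t. apply Rdiv_lt_0_compat; [lra |].
      apply Rmult_lt_0_compat; [apply pow_lt; lra | apply lt_0_INR; lia]. }
    rewrite Rabs_pos_eq in Hb by (apply Rlt_le, Rdiv_lt_0_compat; assumption).
    assert (Hrc : r * c <= t k n).
    { apply Rmult_le_compat_r with (r := c) in Hb; [| lra].
      replace (t k n / c * c) with (t k n) in Hb by (field; lra). exact Hb. }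
    destruct (HN k n Hn Hrc) as [Hk HnN].
    apply in_map_iff. exists (k, n). split; [reflexivity |].
    apply in_prod; apply in_seq; lia.
Qed.

Lemma dsum_ext d e m : (forall i, (1 <= i <= m)%nat -> d i = e i) -> dsum d m = dsum e m.
Proof.
  induction m as [| m IH]; intros H; simpl; [reflexivity |].
  rewrite IH by (intros; apply H; lia). rewrite H by lia. reflexivity.
Qed.

Lemma X_0 x : X 0 x <-> x = 0.
Proof.
  split.
  - intros [d [_ ->]]. reflexivity.
  - intros ->. exists (fun _ => 0). split; [intros; lia | reflexivity].
Qed.

Lemma X_S m x :
  X (S m) x <-> set_plus (X m) (fun y => exists e, digit e /\ y = e / 2 ^ S m) x.
Proof.
  split.
  - intros [d [Hd ->]]. exists (dsum d m), (d (S m) / 2 ^ S m). repeat split.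
    + exists d. split; [intros; apply Hd; lia | reflexivity].
    + exists (d (S m)). split; [apply Hd; lia | reflexivity].
  - intros [a [b [[d [Hd ->]] [[e [He ->]] ->]]]].
    exists (fun i => if Nat.eqb i (S m) then e else d i). split.
    + intros i Hi. destruct (Nat.eqb_spec i (S m)); [exact He | apply Hd; lia].
    + simpl. rewrite Nat.eqb_refl. f_equal.
      apply dsum_ext. intros i Hi. destruct (Nat.eqb_spec i (S m)); [lia | reflexivity].
Qed.

Lemma X_closed m : closed_set (X m).
Proof.
  induction m as [| m IH].
  - apply (closed_set_ext (fun x => x = 0)); [intros x; symmetry; apply X_0 | apply closed_set_singleton].
  - apply (closed_set_ext (set_plus (X m) (fun y => exists e, digit e /\ y = e / 2 ^ S m))).
    { intros x. symmetry. apply X_S. }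
    apply closed_set_plus_sparse; [exact IH | | apply sparse_scaled_digits, pow_lt; lra].
    exists 0. split; [left; reflexivity | unfold Rdiv; ring].
Qed.

Lemma Rat_digit e : digit e -> Rat e.
Proof.
  intros [-> | [k [n [_ ->]]]]; [apply (Rat_IZR 0) |].
  apply Rat_div; [apply (Rat_IZR 1) |].
  apply Rat_mult; [apply Rat_pow, (Rat_IZR 2) | apply Rat_INR].
Qed.

Lemma X_rational m x : X m x -> Rat x.
Proof.
  intros [d [Hd ->]]. induction m as [| m IH]; [apply (Rat_IZR 0) |].
  apply Rat_plus.
  - apply IH. intros i Hi. apply Hd. lia.
  - apply Rat_div; [apply Rat_digit, Hd; lia | apply Rat_pow, (Rat_IZR 2)].
Qed.

Theorem lemma2p2 : forall m : nat, nowhere_dense (X m).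
Proof.
  intros m. apply nowhere_dense_of_closed_rational; [apply X_closed | apply X_rational].
Qed.
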